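(* Let $v_1,\dots,v_d\in\mathbb{Z}^d$ be linearly independent. If $a\in\mathbb{Z}^d$, then the parallelepiped $P=a+\sum_{i=1}^d[0,v_i]$ contains a unimodular copy of $\Delta_d$. If $a\in\mathbb{R}^d$, then the parallelepiped $P=a+\sum_{i=1}^d[0,2v_i]$ contains a unimodular copy of $\Delta_d$.
   Context: $[v,w]$ denotes the segment $\mathrm{conv}(v,w)$ and sums are Minkowski sums. $\Delta_d=\mathrm{conv}(0,e_1,\dots,e_d)$. A unimodular copy of a set $Y$ is $\{Ay+b:y\in Y\}$ with $A\in\mathrm{GL}(d,\mathbb{Z})$ and $b\in\mathbb{Z}^d$. *)

(* Real space R^d is modelled as row vectors 'rV[R]_d over an
   archimedean real closed field R (the reals are such a field). *)
From HB Require Import structures.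
From mathcomp Require Import all_boot all_order all_algebra.
Set Implicit Arguments. Unset Strict Implicit. Unset Printing Implicit Defensive.
Import Order.TTheory GRing.Theory Num.Theory.
Local Open Scope ring_scope.

Section Defs.
Variables (R : archiRcfType) (d : nat).

Definition intv (z : 'rV[int]_d) : 'rV[R]_d := map_mx (fun k : int => k%:~R) z.

Definition conv (n : nat) (p : 'I_n -> 'rV[R]_d) : 'rV[R]_d -> Prop :=
  fun x => exists lam : 'I_n -> R,
    (forall i, 0 <= lam i) /\ \sum_i lam i = 1 /\ x = \sum_i lam i *: p i.

Definition segment (v w : 'rV[R]_d) : 'rV[R]_d -> Prop :=
  conv (fun i : 'I_2 => if val i == 0%N then v else w).

Definition msum (a : 'rV[R]_d) (S : 'I_d -> 'rV[R]_d -> Prop) : 'rV[R]_d -> Prop :=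
  fun x => exists y : 'I_d -> 'rV[R]_d, (forall i, S i (y i)) /\ x = a + \sum_i y i.

Definition parallelepiped (a : 'rV[R]_d) (c : R) (v : 'I_d -> 'rV[int]_d) :=
  msum a (fun i => segment 0 (c *: intv (v i))).

Definition simplex_vert (i : 'I_d.+1) : 'rV[R]_d :=
  if unlift ord0 i is Some j then delta_mx 0 j else 0.

Definition Delta : 'rV[R]_d -> Prop := conv simplex_vert.

(* unimodular image {A y + b : y in Y}, with A in GL(d,Z), b in Z^d
   (row-vector convention: y *m A) *)
Definition unimod_image (A : 'M[int]_d) (b : 'rV[int]_d) (Y : 'rV[R]_d -> Prop) :=
  fun x => exists y, Y y /\ x = y *m map_mx (fun k : int => k%:~R) A + intv b.

Definition contains_unimodular_copy (P Y : 'rV[R]_d -> Prop) :=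
  exists (A : 'M[int]_d) (b : 'rV[int]_d),
    A \in unitmx /\ (forall x, unimod_image A b Y x -> P x).

Definition lin_indep (v : 'I_d -> 'rV[int]_d) :=
  forall c : 'I_d -> R, \sum_i c i *: intv (v i) = 0 -> forall i, c i = 0.

End Defs.

(* Measure points in the basis v_1, ..., v_d of the rows of V, with coordinates
   scaled by N = |det V| so that integer points get integer coordinates.  A
   Hermite-normal-form argument gives a basis y_1, ..., y_d of Z^d whose scaled
   coordinates all lie in [0, N]: take y_k with scaled coordinates vanishing
   beyond k and least positive k-th coordinate, then reduce its earlier
   coordinates modulo the earlier diagonal entries.  Hence
   a + conv(0, y_1, ..., y_d) is a unimodular simplex inside a + sum [0, v_i].
   For real a, the integer point b whose coordinates are the ceilings of those
   of a satisfies b + sum [0, v_i] <= a + sum [0, 2 v_i]. *)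

From HB Require Import structures.
From mathcomp Require Import all_boot all_order all_algebra.
From Stdlib Require Import Classical ClassicalEpsilon.
From mathcomp Require Import lra.
Set Implicit Arguments. Unset Strict Implicit. Unset Printing Implicit Defensive.
Import Order.TTheory GRing.Theory Num.Theory.
Local Open Scope ring_scope.

Lemma classical_ex_min (P : nat -> Prop) n :
  P n -> exists m, P m /\ forall k, P k -> (m <= k)%N.
Proof.
elim/ltn_ind: n => n IH Pn.
case: (classic (exists2 k, (k < n)%N & P k)) => [[k ltkn Pk]|noPk].
  exact: IH ltkn Pk.
exists n; split=> // k Pk; rewrite leqNgt; apply/negP => ltkn.
by apply: noPk; exists k.
Qed.

Section ScaledCoordinates.
Variables (d : nat) (M : 'M[int]_d).

Definition absdet : int := `|\det M|.
Definition sadj : 'M[int]_d := Num.sg (\det M) *: \adj M.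
(* z = (|det M|^-1 scoord z) *m M, so scoord z are the coordinates of z in
   the basis of rows of M, scaled to be integral. *)
Definition scoord (z : 'rV[int]_d) (i : 'I_d) : int := (z *m sadj) 0 i.

Lemma mul_sadj_mx : sadj *m M = absdet%:M.
Proof. by rewrite /sadj -scalemxAl mul_adj_mx scale_scalar_mx /absdet normrEsg. Qed.

Lemma mul_mx_sadj : M *m sadj = absdet%:M.
Proof. by rewrite /sadj -scalemxAr mul_mx_adj scale_scalar_mx /absdet normrEsg. Qed.

Lemma scoord_row k i : scoord (row k M) i = absdet *+ (k == i).
Proof. by rewrite /scoord -row_mul mul_mx_sadj !mxE. Qed.

Lemma scoord_subZ z y q i : scoord (z - q *: y) i = scoord z i - q * scoord y i.
Proof. by rewrite /scoord mulmxBl -scalemxAl !mxE. Qed.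

Definition supported_below (n : nat) (z : 'rV[int]_d) :=
  forall i : 'I_d, (n <= i)%N -> scoord z i = 0.

Hypothesis detM_neq0 : \det M != 0.

Lemma absdet_gt0 : 0 < absdet.
Proof. by rewrite normr_gt0. Qed.

Lemma supported_below0 z : supported_below 0 z -> z = 0.
Proof.
move=> z0; suff zsadj0 : z *m sadj = 0.
  have : absdet *: z == 0 by rewrite -mul_mx_scalar -mul_sadj_mx mulmxA zsadj0 mul0mx.
  by rewrite scalemx_eq0 gt_eqF ?absdet_gt0 // => /eqP.
by apply/rowP => i; rewrite [RHS]mxE; exact: z0.
Qed.

Section TriangularBasis.
Variables (c : 'I_d -> int) (Y : 'M[int]_d).

Definition triangular := forall k : 'I_d,
  [/\ supported_below k.+1 (row k Y), scoord (row k Y) k = c k & 0 < c k].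

Definition minimal_diagonal := forall (k : 'I_d) z,
  supported_below k.+1 z -> 0 < scoord z k -> c k <= scoord z k.

Hypothesis Ytri : triangular.

Lemma triangular_reduce n z : exists t : 'rV[int]_d,
  (forall i : 'I_d, (n <= i)%N -> scoord (z - t *m Y) i = scoord z i) /\
  (forall i : 'I_d, (i < n)%N -> 0 <= scoord (z - t *m Y) i < c i).
Proof.
elim: n z => [|n IH] z.
  by exists 0; rewrite mul0mx subr0.
have [dn|ltnd] := leqP d n.
  have [t [tfix tred]] := IH z; exists t; split=> i lti; first exact/tfix/ltnW.
  exact/tred/(leq_trans (ltn_ord i)).
pose k := Ordinal ltnd; pose q := (scoord z k %/ c k)%Z.
have [Yk0 Ykk ck_gt0] := Ytri k.
have [t [tfix tred]] := IH (z - q *: row k Y).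
exists (t + q *: delta_mx 0 k).
have -> : z - (t + q *: delta_mx 0 k) *m Y = z - q *: row k Y - t *m Y.
  by rewrite mulmxDl -scalemxAl -rowE opprD addrA addrAC.
split=> [i lti|i].
  by rewrite tfix ?(ltnW lti) // scoord_subZ Yk0 // mulr0 subr0.
rewrite ltnS leq_eqVlt => /orP[/eqP eqin|]; last exact: tred.
have -> : i = k by exact: val_inj.
rewrite tfix // scoord_subZ Ykk.
have -> : scoord z k - q * c k = (scoord z k %% c k)%Z.
  by rewrite {1}(divz_eq (scoord z k) (c k)) addrC addKr.
by rewrite modz_ge0 ?gt_eqF // ltz_pmod.
Qed.

Hypothesis cmin : minimal_diagonal.

Lemma triangular_reduced_eq0 w : (forall i, 0 <= scoord w i < c i) -> w = 0.
Proof.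
move=> wred.
(* A last nonzero scaled coordinate of w would undercut the minimal diagonal. *)
have step n : supported_below n.+1 w -> supported_below n w.
  move=> wn i; rewrite leq_eqVlt => /orP[/eqP eqni|]; last exact: wn.
  have /andP[wi_ge0 wi_lt] := wred i.
  apply/eqP; rewrite eq_le wi_ge0 andbT leNgt; apply/negP => wi_gt0.
  by move: wi_lt; rewrite ltNge cmin // -eqni.
suff wsupp m : supported_below (d - m) w by apply: supported_below0; rewrite -(subnn d).
elim: m => [|m IH]; first by move=> i; rewrite subn0 leqNgt ltn_ord.
have [ltmd|] := ltnP m d; first by apply: step; rewrite subnSK.
by rewrite -subn_eq0 => /eqP dm0; move: IH; rewrite subnS dm0.
Qed.

Lemma triangular_spans z : exists t : 'rV[int]_d, z = t *m Y.
Proof.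
have [t [_ tred]] := triangular_reduce d z.
exists t; apply/eqP; rewrite -subr_eq0; apply/eqP/triangular_reduced_eq0 => i.
exact: tred.
Qed.

Lemma triangular_unitmx : Y \in unitmx.
Proof.
have [T YT] :=
  @ClassicalEpsilon.choice _ _ _ (fun i : 'I_d => triangular_spans (delta_mx 0 i)).
suff /mulmx1_unit[] : \matrix_i T i *m Y = 1%:M by [].
by apply/row_matrixP => i; rewrite row_mul rowK row1 -YT.
Qed.

End TriangularBasis.

Lemma exists_triangular : exists c Y,
  [/\ triangular c Y, minimal_diagonal c & forall k, c k <= absdet].
Proof.
have ex_row (k : 'I_d) : exists cz : int * 'rV[int]_d,
    [/\ supported_below k.+1 cz.2, scoord cz.2 k = cz.1, 0 < cz.1, cz.1 <= absdet &
        forall z, supported_below k.+1 z -> 0 < scoord z k -> cz.1 <= scoord z k].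
  pose P n := exists2 z, supported_below k.+1 z & scoord z k = n%:Z /\ (0 < n)%N.
  have P_absdet : P `|\det M|%N.
    exists (row k M) => [i ltki|]; first by rewrite scoord_row -val_eqE /= ltn_eqF.
    by rewrite scoord_row eqxx abszE absz_gt0 detM_neq0.
  have [m [[z zsupp [zk m_gt0]] mmin]] := classical_ex_min P_absdet.
  exists (m%:Z, z); split=> //=.
  - by rewrite /absdet -abszE lez_nat; exact: mmin.
  - move=> z' z'supp z'k_gt0.
    have z'kE : scoord z' k = (`|scoord z' k|%N)%:Z by rewrite gez0_abs // ltW.
    rewrite z'kE lez_nat; apply: mmin; exists z' => //; split=> //.
    by rewrite -ltz_nat -z'kE.
have [f fP] := @ClassicalEpsilon.choice _ _ _ ex_row.
exists (fun k => (f k).1), (\matrix_k (f k).2); split.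
- by move=> k; rewrite rowK; have [] := fP k.
- by move=> k; have [] := fP k.
- by move=> k; have [] := fP k.
Qed.

Lemma exists_unimodular_basis_in_box : exists A : 'M[int]_d,
  A \in unitmx /\ forall k i, 0 <= scoord (row k A) i <= absdet.
Proof.
have [c [X [Xtri cmin c_le]]] := exists_triangular.
have [t tred] :=
  @ClassicalEpsilon.choice _ _ _ (fun k : 'I_d => triangular_reduce Xtri k (row k X)).
pose A := \matrix_k (row k X - t k *m X).
have rowA k : row k A = row k X - t k *m X by rewrite rowK.
have Atri : triangular c A.
  move=> k; have [Xk0 Xkk ck_gt0] := Xtri k; have [tfix _] := tred k.
  rewrite rowA; split => // [i ltki|]; last by rewrite tfix.
  by rewrite tfix ?Xk0 //; exact: ltnW.
exists A; split; first exact: triangular_unitmx Atri cmin.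
move=> k i; have [Ak0 Akk ck_gt0] := Atri k; have [_ tlow] := tred k.
case: (ltngtP k i) => [ltki|ltik|eqki].
- by rewrite Ak0 // lexx ltW // absdet_gt0.
- by rewrite rowA; have /andP[-> /ltW/le_trans->] := tlow i ltik.
- by rewrite (_ : i = k) ?Akk ?c_le ?ltW //; exact: val_inj.
Qed.

End ScaledCoordinates.

Section Parallelepiped.
Variables (R : archiRcfType) (d : nat) (v : 'I_d -> 'rV[int]_d).

Local Notation intmx := (map_mx (fun k : int => k%:~R : R)).

Definition Vmx : 'M[int]_d := \matrix_i v i.

Lemma mul_row_Vmx (u : 'rV[R]_d) : u *m intmx Vmx = \sum_i u 0 i *: intv R (v i).
Proof. by rewrite mulmx_sum_row; apply: eq_bigr => i _; rewrite -map_row rowK. Qed.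

Lemma segment0P (w y : 'rV[R]_d) :
  segment 0 w y -> exists t, 0 <= t <= 1 /\ y = t *: w.
Proof.
case=> lam [lam_ge0 [lam1 ->]]; rewrite !big_ord_recl !big_ord0 /= in lam1 *.
exists (lam (lift ord0 ord0)); split; last by rewrite scaler0 add0r addr0.
have := lam_ge0 ord0; have := lam_ge0 (lift ord0 ord0).
by move: lam1; set l0 := lam ord0; set l1 := lam _ => *; apply/andP; split; lra.
Qed.

Lemma parallelepipedP a c x : parallelepiped a c v x <->
  exists t : 'I_d -> R,
    (forall i, 0 <= t i <= 1) /\ x = a + c *: \sum_i t i *: intv R (v i).
Proof.
split=> [[y [yseg ->]]|[t [t01 ->]]].
  have [t tP] := @ClassicalEpsilon.choice _ _ _ (fun i => segment0P (yseg i)).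
  exists t; split=> [i|]; first by have [] := tP i.
  rewrite scaler_sumr; congr (_ + _); apply: eq_bigr => i _.
  by have [_ ->] := tP i; rewrite !scalerA mulrC.
exists (fun i => (t i * c) *: intv R (v i)); split=> [i|].
  exists (fun j : 'I_2 => if val j == 0%N then 1 - t i else t i).
  have /andP[t_ge0 t_le1] := t01 i.
  split; first by move=> j; case: ifP => _; rewrite ?subr_ge0.
  rewrite !big_ord_recl !big_ord0 /=; split; first by lra.
  by rewrite scaler0 add0r addr0 scalerA.
rewrite scaler_sumr; congr (_ + _); apply: eq_bigr => i _.
by rewrite !scalerA mulrC.
Qed.

Lemma Delta_coord_bounds (y : 'rV[R]_d) :
  Delta y -> (forall k, 0 <= y 0 k) /\ \sum_k y 0 k <= 1.
Proof.
case=> lam [lam_ge0 [lam1 ->]].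
have vertP (j : 'I_d.+1) : (forall k, 0 <= simplex_vert R j 0 k) /\ \sum_k simplex_vert R j 0 k <= 1.
  rewrite /simplex_vert; case: (unlift ord0 j) => [j'|]; last first.
    by split=> [k|]; rewrite ?big1 // => *; rewrite mxE.
  split=> [k|]; first by rewrite mxE; case: (_ && _).
  rewrite (bigD1 j') //= big1 => [|k nkj]; first by rewrite !mxE !eqxx addr0.
  by rewrite mxE (negbTE nkj) andbF.
split=> [k|].
  rewrite summxE sumr_ge0 // => j _; rewrite mxE mulr_ge0 //.
  by case: (vertP j) => ->.
under eq_bigr do rewrite summxE.
rewrite exchange_big /= -lam1 ler_sum // => j _.
under eq_bigr do rewrite mxE.
by rewrite -mulr_sumr ler_piMr //; case: (vertP j).
Qed.

Hypothesis vindep : lin_indep R v.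

Lemma Vmx_det_neq0 : \det Vmx != 0.
Proof.
apply/negP => /eqP detV0.
have /det0P[u u_neq0] : \det (intmx Vmx) == 0 by rewrite det_map_mx detV0.
rewrite mul_row_Vmx => /vindep u0; move/negP: u_neq0; apply.
by apply/eqP/rowP => i; rewrite u0 mxE.
Qed.

Lemma unimodular_simplex_in_parallelepiped (a : 'rV[int]_d) :
  contains_unimodular_copy (parallelepiped (intv R a) 1 v) (@Delta R d).
Proof.
have [A [Aunit Abox]] := exists_unimodular_basis_in_box Vmx_det_neq0.
exists A, a; split=> // _ [y [Dy ->]]; apply/parallelepipedP.
have [y_ge0 y_sum] := Delta_coord_bounds Dy.
pose N : R := (absdet Vmx)%:~R.
have N_gt0 : 0 < N by rewrite ltr0z absdet_gt0 // Vmx_det_neq0.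
pose S := intmx (A *m sadj Vmx).
have SE k i : S k i = (scoord Vmx (row k A) i)%:~R by rewrite /scoord -row_mul !mxE.
pose t := N^-1 *: (y *m S).
exists (fun i => t 0 i); split=> [i|].
  rewrite mxE [(y *m S) 0 i]mxE; under eq_bigr do rewrite SE.
  apply/andP; split.
    rewrite mulr_ge0 ?invr_ge0 ?(ltW N_gt0) // sumr_ge0 // => k _.
    by rewrite mulr_ge0 // ler0z; case/andP: (Abox k i).
  rewrite ler_pdivrMl // mulr1 (le_trans _ (ler_piMl (ltW N_gt0) y_sum)) //.
  rewrite mulr_suml ler_sum // => k _; apply: ler_wpM2l => //.
  by rewrite ler_int; case/andP: (Abox k i).
rewrite scale1r addrC -mul_row_Vmx; congr (_ + _).
rewrite /t -scalemxAl -mulmxA -map_mxM -mulmxA mul_sadj_mx map_mxM map_scalar_mx.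
by rewrite mulmxA mul_mx_scalar scalerA mulVf ?scale1r // gt_eqF.
Qed.

Lemma parallelepiped_int_translate (a : 'rV[R]_d) : exists b : 'rV[int]_d,
  forall x, parallelepiped (intv R b) 1 v x -> parallelepiped a 2 v x.
Proof.
have Vunit : intmx Vmx \in unitmx.
  by rewrite unitmxE det_map_mx unitfE intr_eq0 Vmx_det_neq0.
pose mu := a *m invmx (intmx Vmx).
pose s i := (Num.ceil (mu 0 i))%:~R - mu 0 i.
exists ((\row_i Num.ceil (mu 0 i)) *m Vmx) => x /parallelepipedP[t [t01 ->]].
apply/parallelepipedP; exists (fun i => (s i + t i) / 2); split=> [i|].
  have /andP[t_ge0 t_le1] := t01 i.
  have := ceil_ge (mu 0 i); have := ceilB1_lt (mu 0 i); rewrite /s intrB.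
  by move=> *; apply/andP; split; lra.
have -> : intv R ((\row_i Num.ceil (mu 0 i)) *m Vmx) = a + \sum_i s i *: intv R (v i).
  rewrite [intv R _]/intv map_mxM -[X in X *m _](subrK mu) mulmxDl mulmxKV //.
  rewrite addrC; congr (_ + _); clearbody mu; apply: etrans (mul_row_Vmx _) _.
  by apply: eq_bigr => i _; rewrite !mxE.
rewrite scale1r -addrA -big_split scaler_sumr; congr (_ + _).
by apply: eq_bigr => i _; rewrite scalerA mulrCA divff ?mulr1 ?scalerDl // pnatr_eq0.
Qed.

End Parallelepiped.

Theorem lemma4p2 (R : archiRcfType) (d : nat) (v : 'I_d -> 'rV[int]_d) :
  lin_indep R v ->
  (forall a : 'rV[int]_d,
     contains_unimodular_copy (parallelepiped (intv R a) 1 v) (@Delta R d)) /\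
  (forall a : 'rV[R]_d,
     contains_unimodular_copy (parallelepiped a 2 v) (@Delta R d)).
Proof.
move=> vindep; split=> a; first exact: unimodular_simplex_in_parallelepiped.
have [b Pb_sub] := parallelepiped_int_translate vindep a.
have [A [b' [Aunit sub]]] := unimodular_simplex_in_parallelepiped vindep b.
by exists A, b'; split=> // x /sub /Pb_sub.
Qed.
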